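(* Let $G=(V,E)$ be a finite connected regular undirected unweighted graph with $n$ vertices, let $\lambda\in[0,1]$ and $S_0\subseteq V$. Then $\mathrm{fp}^{\lambda,1}_G(S_0)=|S_0|/n$, and for every $r>0$ the expected absorption time of the $\lambda$-mixed Moran process with fitness $r$ from $S_0$ is at most $C_r n^4$, where $C_r$ depends only on $r$ (i.e., it is $O_r(n^4)$).
   Context: The $\lambda$-mixed Moran process on a connected graph $G=(V,E)$ with $n=|V|\ge 2$: each vertex hosts a resident (fitness $1$) or mutant (fitness $r>0$); the state is the mutant set $S_t\subseteq V$. Each step, independently: with probability $\lambda$ a Birth-death step (a vertex $u$ chosen with probability proportional to fitness among all vertices; a uniformly random neighbor of $u$ takes $u$'s type); with probability $1-\lambda$ a death-Birth step (a uniformly random vertex $v$ dies; a neighbor $u$ of $v$ chosen with probability proportional to fitness among the neighbors of $v$; $v$ takes $u$'s type). $\mathrm{fp}^{\lambda,r}_G(S_0)$ is the probability of reaching $S_t=V$ from $S_0$; the absorption time is the expected number of steps until $S_t\in\{\emptyset,V\}$. *)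

From HB Require Import structures.
From mathcomp Require Import all_boot all_order all_algebra.
From mathcomp Require Import all_classical all_reals all_analysis.
Set Implicit Arguments. Unset Strict Implicit. Unset Printing Implicit Defensive.
Import Order.TTheory GRing.Theory Num.Theory.
Import numFieldNormedType.Exports.
Local Open Scope classical_set_scope.
Local Open Scope ring_scope.

Section Moran.
Variables (R : realType) (T : finType) (e : rel T).

Definition simple_graph := symmetric e /\ irreflexive e.
Definition connected_graph := forall x y : T, connect e x y.
Definition nbhd (x : T) : {set T} := [set y | e x y].
Definition deg (x : T) : nat := #|nbhd x|.
Definition regular_graph := exists d : nat, forall x : T, deg x = d.

Variables (lam r : R).

Definition fit (S : {set T}) (x : T) : R := if x \in S then r else 1.
Definition totfit (S : {set T}) : R := \sum_(x : T) fit S x.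
Definition nbfit (S : {set T}) (v : T) : R := \sum_(w in nbhd v) fit S w.

Definition upd (S : {set T}) (u v : T) : {set T} :=
  if u \in S then v |: S else S :\ v.

(* Birth-death step: u chosen prop. to fitness among all vertices,
   then a uniform neighbour v of u takes u's type. *)
Definition Bd_prob (S S' : {set T}) : R :=
  \sum_(u : T) \sum_(v in nbhd u)
     (fit S u / totfit S) * (deg u)%:R^-1 * (upd S u v == S')%:R.

(* death-Birth step: v chosen uniformly, dies; a neighbour u of v chosen
   prop. to fitness among neighbours of v; v takes u's type. *)
Definition dB_prob (S S' : {set T}) : R :=
  \sum_(v : T) \sum_(u in nbhd v)
     (#|T|%:R)^-1 * (fit S u / nbfit S v) * (upd S u v == S')%:R.

Definition trans (S S' : {set T}) : R :=
  lam * Bd_prob S S' + (1 - lam) * dB_prob S S'.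

Fixpoint hit_within (A : pred {set T}) (k : nat) (S : {set T}) : R :=
  if A S then 1 else
  match k with
  | 0 => 0
  | k'.+1 => \sum_(S' : {set T}) trans S S' * hit_within A k' S'
  end.

Definition is_full (S : {set T}) : bool := S == [set: T]%SET.
Definition is_absorbed (S : {set T}) : bool := (S == (@finset.set0 T)) || (S == [set: T]%SET).

(* fixation probability fp^{lam,r}_G(S0) is the limit of the probability of
   reaching S = V within k steps; we state convergence to the value. *)
Definition fixes_with_prob (S0 : {set T}) (p : R) : Prop :=
  (fun k => hit_within is_full k S0) @ \oo --> p.

(* expected absorption time: E[tau] = sum_{k>=0} P(tau > k), in \bar R *)
Definition absorption_time (S0 : {set T}) : \bar R :=
  (\sum_(0 <= k <oo) ((1 - hit_within is_absorbed k S0)%:E))%E.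

End Moran.

From mathcomp Require Import all_boot all_order all_algebra.
From mathcomp Require Import all_classical all_reals all_analysis.
From mathcomp Require Import ring lra.
Import Order.TTheory GRing.Theory Num.Theory.
Import numFieldNormedType.Exports.
Set Implicit Arguments.
Unset Strict Implicit.
Unset Printing Implicit Defensive.
Local Open Scope ring_scope.

(* At fitness 1 on a regular graph the two orientations of an edge carry the
   same weight in both update rules, so the number of mutants |S| is a
   martingale.  Squeezing it between n times the probability of fixation by
   step k and that plus n times the probability of not being absorbed by step k
   gives fp = |S0|/n, once absorption is known to happen almost surely.
   For any r > 0 the potential (|S| - c)^2, with c = 0 if r >= 1 and c = n
   otherwise, stays in [0, n^2] and grows in expectation by at least 1/(2 n^2)
   at every non-absorbed state: pairing the two orientations of each edge,
   every pair contributes nonnegatively, and an edge across the cut between S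
   and its complement, which exists by connectivity, contributes at least
   1/n^2.  A Foster-Lyapunov argument then bounds the expected absorption time
   by 2 n^4, whatever r is. *)

Lemma nneseries_le_bound (R : realType) (u : nat -> R) (B : R) :
  (forall k, 0 <= u k) -> (forall k, \sum_(j < k) u j <= B) ->
  (\sum_(0 <= k <oo) (u k)%:E <= B%:E)%E.
Proof.
move=> u_ge0 uB; apply: lime_le.
  by apply: is_cvg_nneseries => k _ _; rewrite lee_fin.
by apply: nearW => k; rewrite sumEFin lee_fin big_mkord.
Qed.

Section TransitionKernel.
Variables (R : realType) (T : finType) (e : rel T) (lam r : R).
Hypotheses (T_gt0 : (0 < #|T|)%N) (deg_gt0 : forall x, (0 < deg e x)%N).
Hypotheses (r_gt0 : 0 < r) (lam01 : 0 <= lam <= 1).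
Implicit Types (S : {set T}) (u v x : T) (g : {set T} -> R).

Lemma fit_gt0 S x : 0 < fit r S x.
Proof. by rewrite /fit; case: ifP. Qed.

Lemma totfit_gt0 S : 0 < totfit r S.
Proof.
have /card_gt0P [x _] := T_gt0.
rewrite /totfit (bigD1 x) //= ltr_pwDl ?fit_gt0 // sumr_ge0 // => y _.
exact/ltW/fit_gt0.
Qed.

Lemma nbfit_gt0 S v : 0 < nbfit e r S v.
Proof.
have /card_gt0P [w vw] := deg_gt0 v.
rewrite /nbfit (bigD1 w) //= ltr_pwDl ?fit_gt0 // sumr_ge0 // => y _.
exact/ltW/fit_gt0.
Qed.

Definition bd_weight S u : R := fit r S u / totfit r S / (deg e u)%:R.
Definition db_weight S v u : R := (#|T|%:R)^-1 * (fit r S u / nbfit e r S v).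

Lemma bd_weight_ge0 S u : 0 <= bd_weight S u.
Proof. by rewrite /bd_weight !divr_ge0 // ?ltW ?fit_gt0 ?totfit_gt0. Qed.

Lemma db_weight_ge0 S v u : 0 <= db_weight S v u.
Proof. by rewrite /db_weight mulr_ge0 ?divr_ge0 // ?ltW ?fit_gt0 ?nbfit_gt0. Qed.

Lemma bd_weight_sum S : \sum_u \sum_(v in nbhd e u) bd_weight S u = 1.
Proof.
under eq_bigr => u _.
  rewrite sumr_const -mulr_natr /bd_weight divfK ?pnatr_eq0 -?lt0n ?deg_gt0 //.
  over.
by rewrite -mulr_suml divff // gt_eqF // totfit_gt0.
Qed.

Lemma db_weight_sum S : \sum_v \sum_(u in nbhd e v) db_weight S v u = 1.
Proof.
under eq_bigr => v _.
  rewrite /db_weight -mulr_sumr -mulr_suml divff ?mulr1 ?gt_eqF ?nbfit_gt0 //.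
  over.
by rewrite sumr_const -[X in X = 1]mulr_natr; apply: mulVf; rewrite pnatr_eq0 -lt0n.
Qed.

Lemma expect_edge_kernel (c : T -> T -> R) (F : T -> T -> {set T}) g :
  \sum_S' (\sum_u \sum_(v in nbhd e u) c u v * (F u v == S')%:R) * g S'
  = \sum_u \sum_(v in nbhd e u) c u v * g (F u v).
Proof.
under eq_bigr do rewrite mulr_suml; rewrite exchange_big; apply: eq_bigr => u _.
under eq_bigr do rewrite mulr_suml; rewrite exchange_big; apply: eq_bigr => v _.
rewrite (bigD1 (F u v)) //= eqxx mulr1 big1 ?addr0 // => S' /negbTE.
by rewrite eq_sym => ->; rewrite mulr0 mul0r.
Qed.

Lemma trans_expect S g : \sum_S' trans e lam r S S' * g S' =
  g S + lam * \sum_u \sum_(v in nbhd e u) bd_weight S u * (g (upd S u v) - g S)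
      + (1 - lam) * \sum_v \sum_(u in nbhd e v) db_weight S v u * (g (upd S u v) - g S).
Proof.
have recenter (w : T -> T -> R) (F : T -> T -> {set T}) :
    \sum_u \sum_(v in nbhd e u) w u v = 1 ->
    \sum_u \sum_(v in nbhd e u) w u v * g (F u v) =
    g S + \sum_u \sum_(v in nbhd e u) w u v * (g (F u v) - g S).
  move=> w1; rewrite -{1}(mulr1 (g S)) -w1 mulr_sumr -big_split.
  apply: eq_bigr => u _; rewrite mulr_sumr -big_split.
  by apply: eq_bigr => v _ /=; ring.
have -> : \sum_S' trans e lam r S S' * g S' =
    lam * \sum_S' Bd_prob e r S S' * g S' + (1 - lam) * \sum_S' dB_prob e r S S' * g S'.
  by rewrite !mulr_sumr -big_split; apply: eq_bigr => S' _ /=; rewrite /trans; ring.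
rewrite (expect_edge_kernel (fun u _ => bd_weight S u) (upd S)).
rewrite (expect_edge_kernel (db_weight S) (fun v u => upd S u v)).
rewrite (recenter (fun u _ => bd_weight S u) (upd S)) ?bd_weight_sum //.
rewrite (recenter (db_weight S) (fun v u => upd S u v)) ?db_weight_sum //.
ring.
Qed.

Lemma trans_ge0 S S' : 0 <= trans e lam r S S'.
Proof.
have [lam0 lam1] := andP lam01.
rewrite /trans addr_ge0 // mulr_ge0 ?subr_ge0 // !sumr_ge0 // => u _;
  rewrite sumr_ge0 // => v _; rewrite mulr_ge0 //.
- exact: bd_weight_ge0.
- exact: db_weight_ge0.
Qed.

Lemma trans_sum1 S : \sum_S' trans e lam r S S' = 1.
Proof.
have := trans_expect S (fun=> 1); under eq_bigr do rewrite mulr1; move=> ->.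
by rewrite !big1 ?mulr0 ?addr0 // => u _; rewrite big1 // => v _; rewrite subrr mulr0.
Qed.

End TransitionKernel.

Section Hitting.
Variables (R : realType) (T : finType) (e : rel T) (lam r : R).
Hypothesis trans_ge0 : forall S S', 0 <= trans e lam r S S'.
Hypothesis trans_sum1 : forall S, \sum_S' trans e lam r S S' = 1.
Implicit Types (A B : pred {set T}) (S : {set T}).
Local Notation P := (trans e lam r).
Local Notation hit := (hit_within e lam r).

Lemma hit_within_in A k S : A S -> hit A k S = 1.
Proof. by case: k => [|k] /= ->. Qed.

Lemma hit_withinS_out A k S : ~~ A S -> hit A k.+1 S = \sum_S' P S S' * hit A k S'.
Proof. by move=> /negbTE /= ->. Qed.

Lemma hit_withinS_compl A k S : ~~ A S ->
  1 - hit A k.+1 S = \sum_S' P S S' * (1 - hit A k S').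
Proof.
move=> AS; rewrite hit_withinS_out // -[X in X - _](trans_sum1 S) -sumrB.
by apply: eq_bigr => S' _; rewrite mulrBr mulr1.
Qed.

Lemma hit_within_bounds A k S : 0 <= hit A k S <= 1.
Proof.
elim: k S => [|k IH] S /=; case: (A S); rewrite ?lexx ?ler01 //.
apply/andP; split.
  by apply: sumr_ge0 => S' _; rewrite mulr_ge0 //; case/andP: (IH S').
rewrite -(trans_sum1 S); apply: ler_sum => S' _.
by rewrite ler_piMr //; case/andP: (IH S').
Qed.

Lemma hit_within_leS A S k : hit A k S <= hit A k.+1 S.
Proof.
have [AS | nAS] := boolP (A S); first by rewrite !hit_within_in.
rewrite hit_withinS_out //; elim: k S nAS => [|k IH] S nAS.
  rewrite [hit A 0 S]/= (negbTE nAS) sumr_ge0 // => S' _.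
  by rewrite mulr_ge0 //; case/andP: (hit_within_bounds A 0 S').
rewrite hit_withinS_out //; apply: ler_sum => S' _; rewrite ler_wpM2l //.
have [AS' | nAS'] := boolP (A S'); first by rewrite !hit_within_in.
by rewrite [hit A k.+1 S']hit_withinS_out // IH.
Qed.

Lemma hit_within_monotone A S :
  {homo (fun k => hit A k S) : j k / (j <= k)%N >-> j <= k}.
Proof. exact: homo_leq lexx le_trans (hit_within_leS A S). Qed.

(* The sum on the left is the expected hitting time of A truncated at k. *)
Lemma escape_sum_le_drift A (phi : {set T} -> R) (M q : R) :
  (forall S, 0 <= phi S <= M) ->
  (forall S, ~~ A S -> phi S + q <= \sum_S' P S S' * phi S') ->
  forall k S, q * \sum_(j < k) (1 - hit A j S) <= M - phi S.
Proof.
move=> phi_bnd drift k; elim: k => [|k IH] S.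
  by rewrite big_ord0 mulr0 subr_ge0; case/andP: (phi_bnd S).
have [AS | nAS] := boolP (A S).
  rewrite big1 ?mulr0 ?subr_ge0; first by case/andP: (phi_bnd S).
  by move=> j _; rewrite hit_within_in // subrr.
rewrite big_ord_recl; have -> : hit A ord0 S = 0 by rewrite /= (negbTE nAS).
rewrite subr0; under eq_bigr do rewrite lift0 hit_withinS_compl //.
rewrite exchange_big /=; under eq_bigr do rewrite -mulr_sumr.
have step : q * \sum_S' P S S' * \sum_(j < k) (1 - hit A j S') <=
            M - \sum_S' P S S' * phi S'.
  have -> : M - \sum_S' P S S' * phi S' = \sum_S' P S S' * (M - phi S').
    rewrite -[M in LHS]mul1r -(trans_sum1 S) mulr_suml -sumrB.
    by apply: eq_bigr => S' _; rewrite mulrBr mulrC.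
  by rewrite mulr_sumr; apply: ler_sum => S' _; rewrite mulrCA ler_wpM2l.
have := drift S nAS; rewrite mulrDr mulr1; lra.
Qed.

Lemma escape_le_mean A S (b : R) :
  (forall k, \sum_(j < k) (1 - hit A j S) <= b) ->
  forall k, 1 - hit A k S <= b / k.+1%:R.
Proof.
move=> sum_le k; rewrite ler_pdivlMr ?ltr0n //; apply: le_trans (sum_le k.+1).
have -> : (1 - hit A k S) * k.+1%:R = \sum_(j < k.+1) (1 - hit A k S).
  by rewrite sumr_const card_ord mulr_natr.
apply: ler_sum => j _; rewrite lerD2l lerN2 hit_within_monotone //.
by rewrite -ltnS.
Qed.

Lemma optional_stopping_bounds A B (g : {set T} -> R) (M : R) :
  (forall S, \sum_S' P S S' * g S' = g S) -> (forall S, 0 <= g S <= M) ->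
  (forall S, A S -> g S = M) -> (forall S, B S -> ~~ A S -> g S = 0) ->
  forall k S, M * hit A k S <= g S <= M * hit A k S + M * (1 - hit B k S).
Proof.
move=> g_harm g_bnd gA gB k S.
have M_ge0 : 0 <= M by case/andP: (g_bnd S) => /le_trans; apply.
have hit_ge0 C j S' : 0 <= hit C j S' by case/andP: (hit_within_bounds C j S').
have hit_le1 C j S' : hit C j S' <= 1 by case/andP: (hit_within_bounds C j S').
elim: k S => [|k IH] S; have [AS | nAS] := boolP (A S).
- by rewrite hit_within_in // mulr1 gA // lexx lerDl mulr_ge0 // subr_ge0.
- rewrite /= (negbTE nAS) mulr0 add0r; have [g0 gM] := andP (g_bnd S).
  by rewrite g0 /=; case: ifP => BS; [rewrite gB // subrr mulr0 | rewrite subr0 mulr1].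
- by rewrite hit_within_in // mulr1 gA // lexx lerDl mulr_ge0 // subr_ge0.
have lo : M * hit A k.+1 S <= g S.
  rewrite hit_withinS_out // -g_harm mulr_sumr; apply: ler_sum => S' _.
  by rewrite mulrCA ler_wpM2l //; case/andP: (IH S').
rewrite lo andTb; have [BS | nBS] := boolP (B S).
  by rewrite [hit B _ S]hit_within_in // subrr mulr0 addr0 gB // mulr_ge0.
rewrite hit_withinS_out // hit_withinS_compl // !mulr_sumr -big_split -g_harm /=.
apply: ler_sum => S' _; rewrite !(mulrCA M) -mulrDr ler_wpM2l //.
by case/andP: (IH S').
Qed.

End Hitting.

Section Graph.
Variables (T : finType) (e : rel T).

Lemma deg_gt0_connected : (1 < #|T|)%N -> connected_graph e ->
  forall x, (0 < deg e x)%N.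
Proof.
move=> T_gt1 conn x.
have /card_gt0P [y] : (0 < #|[set~ x]|)%N by rewrite cardsC1 -subn1 subn_gt0.
rewrite !inE => yx; case/connectP: (conn x y) => [[|z p]] /=.
  by move=> _ yx'; rewrite yx' eqxx in yx.
by move=> /andP [xz _] _; apply/card_gt0P; exists z; rewrite inE.
Qed.

Lemma cut_edge : symmetric e -> connected_graph e -> forall S : {set T},
  ~~ is_absorbed S -> exists a b, [/\ a \in S, b \notin S & e a b].
Proof.
move=> e_sym conn S; rewrite /is_absorbed negb_or -properT.
case/andP=> /set0Pn [a aS] /properP [_ [b _ bS]].
have [/existsP [x /existsP [y /and3P [xS yS exy]]] | none] :=
  boolP [exists x, exists y, [&& x \in S, y \notin S & e x y]].
  by exists x, y.
have S_closed : fingraph.closed e (mem S).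
  move=> x y exy; apply/idP/idP => [xS | yS']; apply/negPn/negP => nS;
    move/existsPn: none => /(_ _) /existsPn none.
  - by have := none x y; rewrite xS nS exy.
  - by have := none y x; rewrite yS' nS e_sym exy.
by move: bS; rewrite -(closed_connect S_closed (conn a b)) aS.
Qed.

End Graph.

Section SymmetricEdgeSums.
Variables (R : realType) (T : finType) (e : rel T).
Hypothesis e_sym : symmetric e.
Implicit Types (f : T -> T -> R).

Lemma sum_nbhd_sym f : \sum_u \sum_(v in nbhd e u) f u v =
  2^-1 * \sum_u \sum_v (e u v)%:R * (f u v + f v u).
Proof.
have sum_e f' :
    \sum_u \sum_(v in nbhd e u) f' u v = \sum_u \sum_v (e u v)%:R * f' u v.
  apply: eq_bigr => u _; rewrite big_mkcond; apply: eq_bigr => v _.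
  by rewrite inE; case: (e u v); rewrite ?mul1r ?mul0r.
have swap : \sum_u \sum_v (e u v)%:R * f v u = \sum_u \sum_v (e u v)%:R * f u v.
  by rewrite exchange_big; apply: eq_bigr => u _; apply: eq_bigr => v _; rewrite e_sym.
have -> : \sum_u \sum_v (e u v)%:R * (f u v + f v u) =
          \sum_u \sum_v (e u v)%:R * f u v + \sum_u \sum_v (e u v)%:R * f v u.
  rewrite -big_split; apply: eq_bigr => u _.
  by rewrite -big_split; apply: eq_bigr => v _; rewrite mulrDr.
by rewrite swap sum_e; field.
Qed.

Lemma sum_nbhd_eq0 f : (forall u v, e u v -> f u v + f v u = 0) ->
  \sum_u \sum_(v in nbhd e u) f u v = 0.
Proof.
move=> f0; rewrite sum_nbhd_sym big1 ?mulr0 // => u _; apply: big1 => v _.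
by have [/f0 -> | _] := boolP (e u v); rewrite ?mulr0 ?mul0r.
Qed.

Lemma sum_nbhd_ge f a b : (forall u v, e u v -> 0 <= f u v + f v u) -> e a b ->
  2^-1 * (f a b + f b a) <= \sum_u \sum_(v in nbhd e u) f u v.
Proof.
move=> f_ge0 eab; rewrite sum_nbhd_sym; apply: ler_wpM2l; first by rewrite invr_ge0.
have term_ge0 u v : 0 <= (e u v)%:R * (f u v + f v u).
  by have [/f_ge0 | _] := boolP (e u v); rewrite ?mul1r ?mul0r.
rewrite (bigD1 a) //= (bigD1 b) //= eab mul1r -addrA lerDl addr_ge0 //.
  by rewrite sumr_ge0.
by rewrite sumr_ge0 // => u _; rewrite sumr_ge0.
Qed.

End SymmetricEdgeSums.

Section Update.
Variables (T : finType) (S : {set T}).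

Lemma upd_same u v : (u \in S) = (v \in S) -> upd S u v = S.
Proof.
rewrite /upd => uv; apply/setP => x; case: ifP => uS; rewrite !inE;
  case: eqP => // ->; by rewrite -uv uS.
Qed.

Lemma card_upd_in a b : a \in S -> b \notin S -> #|upd S a b| = #|S|.+1.
Proof. by move=> aS bS; rewrite /upd aS cardsU1 bS. Qed.

Lemma card_upd_out a b : a \in S -> b \notin S -> #|upd S b a|.+1 = #|S|.
Proof. by move=> aS /negbTE bS; rewrite /upd bS (cardsD1 a S) aS add1n. Qed.

End Update.

Section RegularGraph.
Variables (R : realType) (T : finType) (e : rel T) (lam : R) (d : nat).
Hypotheses (T_gt1 : (1 < #|T|)%N) (e_sym : symmetric e) (conn : connected_graph e).
Hypotheses (dreg : forall x, deg e x = d) (lam01 : 0 <= lam <= 1).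
Implicit Types (S : {set T}) (u v x : T).
Local Notation n := (#|T|%:R : R).

Let T_gt0 : (0 < #|T|)%N := ltnW T_gt1.
Let deg_gt0 : forall x, (0 < deg e x)%N := deg_gt0_connected T_gt1 conn.

Let n_gt0 : 0 < n.
Proof. by rewrite ltr0n. Qed.

Let d_gt0 : (0 : R) < d%:R.
Proof. by have /card_gt0P [x _] := T_gt0; rewrite ltr0n -(dreg x) deg_gt0. Qed.

Let d_le_n : (d%:R : R) <= n.
Proof. by have /card_gt0P [x _] := T_gt0; rewrite ler_nat -(dreg x) max_card. Qed.

Let card_le_n S : (#|S|%:R : R) <= n.
Proof. by rewrite ler_nat max_card. Qed.

Section Potential.
Variable r : R.
Hypothesis r_gt0 : 0 < r.

Let P_ge0 := trans_ge0 T_gt0 deg_gt0 r_gt0 lam01.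
Let P_sum1 := trans_sum1 lam T_gt0 deg_gt0 r_gt0.

(* Centring on the side favoured by selection makes (r - 1) (|S| - c) >= 0. *)
Definition potential_center : R := if 1 <= r then 0 else n.
Definition potential S : R := (#|S|%:R - potential_center) ^+ 2.

Lemma potential_bounds S : 0 <= potential S <= n ^+ 2.
Proof.
have S_ge0 : (0 : R) <= #|S|%:R by rewrite ler0n.
have := card_le_n S; rewrite /potential sqr_ge0 /potential_center.
by case: ifP => _ S_le; nra.
Qed.

Lemma potential_upd_in S a b : a \in S -> b \notin S ->
  potential (upd S a b) - potential S = 2 * (#|S|%:R - potential_center) + 1.
Proof. by move=> aS bS; rewrite /potential card_upd_in // -natr1; ring. Qed.

Lemma potential_upd_out S a b : a \in S -> b \notin S ->
  potential (upd S b a) - potential S = 1 - 2 * (#|S|%:R - potential_center).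
Proof. by move=> aS bS; rewrite /potential -(card_upd_out aS bS) -natr1; ring. Qed.

Lemma fit_bounds S x : Num.min 1 r <= fit r S x <= Num.max 1 r.
Proof. by rewrite /fit; case: ifP => _; rewrite ge_min le_max lexx ?orbT. Qed.

Let max_le : Num.max 1 r <= r + 1.
Proof. by rewrite ge_max lerDl ler01 lerDr ltW. Qed.

Lemma totfit_le S : totfit r S <= (r + 1) * n.
Proof.
have -> : (r + 1) * n = \sum_(x : T) (r + 1) by rewrite sumr_const mulr_natr.
apply: ler_sum => x _; apply: le_trans max_le.
by case/andP: (fit_bounds S x).
Qed.

Lemma nbfit_bounds S v :
  Num.min 1 r * d%:R <= nbfit e r S v <= Num.max 1 r * d%:R.
Proof.
have cst c : \sum_(w in nbhd e v) c = c * d%:R.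
  by rewrite sumr_const -(dreg v) mulr_natr.
rewrite -!cst; apply/andP; split; apply: ler_sum => w _;
  by case/andP: (fit_bounds S w).
Qed.

Lemma potential_center_sign S : 0 <= (r - 1) * (#|S|%:R - potential_center).
Proof.
rewrite /potential_center; case: ifP => r_ge1.
  by rewrite subr0 mulr_ge0 ?subr_ge0 ?ler0n.
by rewrite mulr_le0 ?subr_le0 ?card_le_n // ltW // ltNge r_ge1.
Qed.

Lemma potential_center_sign_db S v w :
  0 <= (#|S|%:R - potential_center) * (r / nbfit e r S w - 1 / nbfit e r S v).
Proof.
have Nv_gt0 := nbfit_gt0 deg_gt0 r_gt0 S v.
have Nw_gt0 := nbfit_gt0 deg_gt0 r_gt0 S w.
have [Nv_lo Nv_hi] := andP (nbfit_bounds S v).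
have [Nw_lo Nw_hi] := andP (nbfit_bounds S w).
have rd_gt0 : 0 < r * d%:R by rewrite mulr_gt0.
have inv_d : 1 / d%:R = r / (r * d%:R) by field; rewrite !gt_eqF.
rewrite /potential_center; case: ifP => r_ge1.
  move: Nv_lo Nw_hi; rewrite (min_idPl r_ge1) (max_idPr r_ge1) mul1r => Nv_lo Nw_hi.
  rewrite subr0 mulr_ge0 ?ler0n // subr_ge0 (@le_trans _ _ (1 / d%:R)) //.
    by rewrite !div1r lef_pV2 ?posrE.
  by rewrite inv_d ler_pM2l // lef_pV2 ?posrE.
have r_le1 : r <= 1 by rewrite ltW // ltNge r_ge1.
move: Nv_hi Nw_lo; rewrite (min_idPr r_le1) (max_idPl r_le1) mul1r => Nv_hi Nw_lo.
rewrite mulr_le0 ?subr_le0 ?card_le_n // (@le_trans _ _ (1 / d%:R)) //.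
  by rewrite inv_d ler_pM2l // lef_pV2 ?posrE.
by rewrite !div1r lef_pV2 ?posrE.
Qed.

Let bd_incr S u v := bd_weight e r S u * (potential (upd S u v) - potential S).
Let db_incr S v u := db_weight e r S v u * (potential (upd S u v) - potential S).

Lemma bd_incr_cut S a b : a \in S -> b \notin S ->
  (n ^+ 2)^-1 <= bd_incr S a b + bd_incr S b a.
Proof.
move=> aS bS; rewrite /bd_incr potential_upd_in // potential_upd_out //.
rewrite /bd_weight !dreg /fit aS (negbTE bS) /=.
have F_gt0 := totfit_gt0 T_gt0 r_gt0 S.
set F := totfit r S; set t := _ - potential_center.
have -> : r / F / d%:R * (2 * t + 1) + 1 / F / d%:R * (1 - 2 * t) =
          (r + 1 + 2 * ((r - 1) * t)) / (F * d%:R).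
  by field; rewrite !gt_eqF.
rewrite ler_pdivlMr ?mulr_gt0 // mulrC ler_pdivrMr ?exprn_gt0 //.
apply: le_trans (_ : (r + 1) * n ^+ 2 <= _).
  by rewrite expr2 mulrA; apply: ler_pM; [exact: ltW | exact: ltW | exact: totfit_le |].
by rewrite ler_wpM2r ?exprn_ge0 ?ler0n // lerDl mulr_ge0 // potential_center_sign.
Qed.

Lemma db_incr_cut S a b : a \in S -> b \notin S ->
  (n ^+ 2)^-1 <= db_incr S a b + db_incr S b a.
Proof.
move=> aS bS; rewrite /db_incr potential_upd_out // potential_upd_in //.
rewrite /db_weight /fit aS (negbTE bS) /=.
have sign := potential_center_sign_db S a b.
have Na_gt0 := nbfit_gt0 deg_gt0 r_gt0 S a.
have Nb_gt0 := nbfit_gt0 deg_gt0 r_gt0 S b.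
set Na := nbfit e r S a in sign Na_gt0 *; set Nb := nbfit e r S b in sign Nb_gt0 *.
set t := _ - potential_center in sign *.
have mass : n^-1 <= 1 / Na + r / Nb.
  have rd_gt0 : 0 < (r + 1) * d%:R by rewrite mulr_gt0 // addr_gt0.
  have N_le v : nbfit e r S v <= (r + 1) * d%:R.
    by case/andP: (nbfit_bounds S v) => _ /le_trans; apply; rewrite ler_wpM2r ?ler0n.
  apply: le_trans (_ : 1 / ((r + 1) * d%:R) + r / ((r + 1) * d%:R) <= _).
    have -> : 1 / ((r + 1) * d%:R) + r / ((r + 1) * d%:R) = d%:R^-1.
      by field; rewrite !gt_eqF // addr_gt0.
    by rewrite lef_pV2 ?posrE.
  rewrite lerD // ler_pM2l ?ltr01 ?lef_pV2 ?posrE ?N_le //.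
have -> : n^-1 * (1 / Na) * (1 - 2 * t) + n^-1 * (r / Nb) * (2 * t + 1) =
          n^-1 * ((1 / Na + r / Nb) + 2 * (t * (r / Nb - 1 / Na))) by ring.
rewrite expr2 invfM ler_wpM2l ?invr_ge0 ?ler0n //; lra.
Qed.

Lemma potential_drift S : ~~ is_absorbed S ->
  potential S + (2 * n ^+ 2)^-1 <= \sum_S' trans e lam r S S' * potential S'.
Proof.
move=> /(cut_edge e_sym conn) [a [b [aS bS eab]]].
have n2_ge0 : 0 <= (n ^+ 2)^-1 by rewrite invr_ge0 exprn_ge0 ?ler0n.
have edge_sum (f : T -> T -> R) :
    (forall u v, (u \in S) = (v \in S) -> f u v = 0) ->
    (forall u v, u \in S -> v \notin S -> (n ^+ 2)^-1 <= f u v + f v u) ->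
    (2 * n ^+ 2)^-1 <= \sum_u \sum_(v in nbhd e u) f u v.
  move=> f_same f_cut; rewrite invfM; apply: le_trans (sum_nbhd_ge e_sym _ eab).
    by rewrite ler_wpM2l ?invr_ge0 ?ler0n ?f_cut.
  move=> u v _; have [uS | uS] := boolP (u \in S); have [vS | vS] := boolP (v \in S).
  - by rewrite !f_same ?uS ?vS ?addr0.
  - exact: le_trans n2_ge0 (f_cut _ _ uS vS).
  - by rewrite addrC; exact: le_trans n2_ge0 (f_cut _ _ vS uS).
  - by rewrite !f_same ?(negbTE uS) ?(negbTE vS) ?addr0.
have bd_sum := edge_sum (bd_incr S) _ (@bd_incr_cut S).
have db_sum := edge_sum (db_incr S) _ (@db_incr_cut S).
rewrite trans_expect // -addrA lerD2l.
have [lam_ge0 lam_le1] := andP lam01.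
apply: le_trans (_ : lam * (2 * n ^+ 2)^-1 + (1 - lam) * (2 * n ^+ 2)^-1 <= _).
  by rewrite -mulrDl subrKC mul1r.
apply: lerD; apply: ler_wpM2l; rewrite ?subr_ge0 //.
  by apply: bd_sum => u v /upd_same; rewrite /bd_incr => ->; rewrite subrr mulr0.
by apply: db_sum => v u /esym /upd_same; rewrite /db_incr => ->; rewrite subrr mulr0.
Qed.

Lemma escape_sum_le k S :
  \sum_(j < k) (1 - hit_within e lam r (@is_absorbed T) j S) <= 2 * n ^+ 4.
Proof.
have q_gt0 : 0 < (2 * n ^+ 2)^-1 by rewrite invr_gt0 mulr_gt0 ?exprn_gt0.
rewrite -(ler_pM2l q_gt0).
apply: le_trans (escape_sum_le_drift P_ge0 P_sum1 potential_bounds potential_drift k S) _.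
have -> : (2 * n ^+ 2)^-1 * (2 * n ^+ 4) = n ^+ 2 by field; rewrite gt_eqF.
by rewrite gerBl; case/andP: (potential_bounds S).
Qed.

Lemma absorption_time_le S0 : (absorption_time e lam r S0 <= (2 * n ^+ 4)%:E)%E.
Proof.
apply: nneseries_le_bound => [k |]; last by move=> k; apply: escape_sum_le.
by rewrite subr_ge0; case/andP: (hit_within_bounds P_ge0 P_sum1 (@is_absorbed T) k S0).
Qed.

End Potential.

Lemma card_martingale S : \sum_S' trans e lam 1 S S' * #|S'|%:R = #|S|%:R.
Proof.
have nbfit1 S' x : nbfit e 1 S' x = d%:R :> R.
  by rewrite /nbfit /fit; under eq_bigr do rewrite if_same; rewrite sumr_const -(dreg x).
have card_pair u v : (#|upd S u v|%:R - #|S|%:R) + (#|upd S v u|%:R - #|S|%:R) = 0 :> R.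
  have [uS | uS] := boolP (u \in S); have [vS | vS] := boolP (v \in S).
  - by rewrite !upd_same ?uS ?vS // subrr addr0.
  - by rewrite (card_upd_in uS vS) -(card_upd_out uS vS) -!natr1; ring.
  - by rewrite (card_upd_in vS uS) -(card_upd_out vS uS) -!natr1; ring.
  - by rewrite !upd_same ?(negbTE uS) ?(negbTE vS) // subrr addr0.
have bd_zero : \sum_u \sum_(v in nbhd e u)
    bd_weight e 1 S u * (#|upd S u v|%:R - #|S|%:R) = 0 :> R.
  apply: (sum_nbhd_eq0 e_sym) => u v _.
  have -> : bd_weight e 1 S v = bd_weight e 1 S u :> R.
    by rewrite /bd_weight /fit !if_same !dreg.
  by rewrite -mulrDr card_pair mulr0.
have db_zero : \sum_v \sum_(u in nbhd e v)
    db_weight e 1 S v u * (#|upd S u v|%:R - #|S|%:R) = 0 :> R.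
  apply: (sum_nbhd_eq0 e_sym) => u v _.
  have -> : db_weight e 1 S v u = db_weight e 1 S u v :> R.
    by rewrite /db_weight /fit !if_same !nbfit1.
  by rewrite -mulrDr addrC card_pair mulr0.
by rewrite trans_expect // bd_zero db_zero !mulr0 !addr0.
Qed.

Lemma fixation_neutral S0 : fixes_with_prob e lam 1 S0 (#|S0|%:R / n).
Proof.
have P_ge0 := trans_ge0 T_gt0 deg_gt0 ltr01 lam01.
have P_sum1 := trans_sum1 lam T_gt0 deg_gt0 ltr01.
have card_bnd S : (0 : R) <= #|S|%:R <= n by rewrite ler0n card_le_n.
have full S : is_full S -> #|S|%:R = n :> R by move=> /eqP ->; rewrite cardsT.
have empty S : is_absorbed S -> ~~ is_full S -> #|S|%:R = 0 :> R.
  by rewrite /is_absorbed /is_full => /orP [/eqP -> _ | ->] //; rewrite cards0.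
have sandwich :=
  optional_stopping_bounds P_ge0 P_sum1 card_martingale card_bnd full empty.
have tail := escape_le_mean P_ge0 P_sum1 (fun k => escape_sum_le ltr01 k S0).
set c := #|S0|%:R / n; set b := 2 * n ^+ 4.
apply: (squeeze_cvgr (f := fun k => c - b / k.+1%:R) (h := fun=> c)).
- apply: nearW => k /=; have [lo hi] := andP (sandwich k S0).
  set h := hit_within e lam 1 (@is_full T) k S0 in lo hi *.
  set u := 1 - hit_within e lam 1 (@is_absorbed T) k S0 in hi.
  have h_le : h <= c by rewrite ler_pdivlMr // mulrC.
  have c_le : c <= h + u by rewrite ler_pdivrMr // mulrDl ![_ * n]mulrC.
  rewrite h_le andbT lerBlDr; apply: le_trans c_le _.
  by rewrite lerD2l; apply: tail.
- rewrite -[X in (_ --> X)%classic]subr0; apply: cvgB; first exact: cvg_cst.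
  by rewrite -(mulr0 b); exact: cvgMl_tmp cvg_harmonic.
- exact: cvg_cst.
Qed.

End RegularGraph.

Theorem mainTheorem7 :
  (forall (R : realType) (T : finType) (e : rel T) (lam : R) (S0 : {set T}),
      (1 < #|T|)%N -> simple_graph e -> connected_graph e -> regular_graph e ->
      0 <= lam <= 1 ->
      fixes_with_prob e lam 1 S0 (#|S0|%:R / #|T|%:R))
  /\
  (forall (R : realType) (r : R), 0 < r ->
     exists C : R, forall (T : finType) (e : rel T) (lam : R) (S0 : {set T}),
      (1 < #|T|)%N -> simple_graph e -> connected_graph e -> regular_graph e ->
      0 <= lam <= 1 ->
      (absorption_time e lam r S0 <= (C * (#|T|%:R) ^+ 4)%:E)%E).
Proof.
split=> [R T e lam S0 T_gt1 [e_sym _] conn [d dreg] lam01 | R r r_gt0].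
  exact: fixation_neutral.
exists 2 => T e lam S0 T_gt1 [e_sym _] conn [d dreg] lam01.
exact: absorption_time_le.
Qed.
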